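(* Let $H$ be a separable real Hilbert space with complete orthonormal system $(e_k)_{k\ge1}$, $F\subset H$ compact, and $\mu$ a probability measure on $F$. Then for every $h\in F$, \[\lim_{\min(d,n)\to\infty}\Lambda^\mu_{d,n}(h)=\mu(\{h\}).\]
   Context: $c_0(\mathbb{N})$ is the set of sequences of nonnegative integers with finitely many nonzero entries; for $a\in c_0(\mathbb{N})$, $f^a:=\prod_k\langle f,e_k\rangle^{a_k}$. A polynomial on $H$ is a finite linear combination $p(f)=\sum_a p_a f^a$; its algebraic degree is $\max\{\sum_k a_k: p_a\neq0\}$ and its harmonic degree is $\max\{k: a_k\neq0\text{ for some } a\text{ with } p_a\neq0\}$. $P_{d,n}$ is the space of polynomials of algebraic degree at most $d$ and harmonic degree at most $n$. The Christoffel function is $\Lambda^\mu_{d,n}(h)=\min\{\int_F p(f)^2\,d\mu(f): p\in P_{d,n},\ p(h)=1\}$ for $h\in H$. *)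

From HB Require Import structures.
From mathcomp Require Import all_boot all_order all_algebra.
From mathcomp Require Import all_classical all_reals all_analysis.
Set Implicit Arguments. Unset Strict Implicit. Unset Printing Implicit Defensive.
Import Order.TTheory GRing.Theory Num.Theory.
Import numFieldNormedType.Exports.
Local Open Scope classical_set_scope.
Local Open Scope ring_scope.

Definition borelType (H : topologicalType) := g_sigma_algebraType (@open H).

Definition is_inner_product (R : realType) (H : normedModType R)
  (ip : H -> H -> R) : Prop :=
  [/\ (forall x y, ip x y = ip y x),
      (forall (a : R) (x y z : H), ip (a *: x + y) z = a * ip x z + ip y z) &
      (forall x, ip x x = `|x| ^+ 2)].

(* (e k)_{k : nat} is a complete orthonormal system; e k stands for e_{k+1}. *)
Definition complete_orthonormal (R : realType) (H : normedModType R)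
  (ip : H -> H -> R) (e : nat -> H) : Prop :=
  (forall i j, ip (e i) (e j) = (i == j)%:R) /\
  (forall f, (forall k, ip f (e k) = 0) -> f = 0).

(* P_{d,n}: polynomials p(f) = sum_a p_a f^a, with f^a = prod_k <f,e_k>^(a_k),
   whose nonzero coefficients p_a have a supported on {e_1,...,e_n}
   (harmonic degree <= n) and sum_k a_k <= d (algebraic degree <= d).
   A multi-index supported on the first n coordinates with total degree <= d
   is encoded as a : 'I_n -> 'I_d.+1 (each a_k <= d automatically). *)
Definition Pdn (R : realType) (H : Type) (ip : H -> H -> R) (e : nat -> H)
  (d n : nat) : set (H -> R) :=
  [set p | exists c : {ffun {ffun 'I_n -> 'I_d.+1} -> R},
     (forall a, c a != 0 -> (\sum_(i < n) (a i : nat) <= d)%N) /\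
     (forall f, p f = \sum_a c a * \prod_(i < n) (ip f (e i)) ^+ (a i))].

(* Christoffel function Lambda^mu_{d,n}(h) = min { int_F p^2 dmu : p in P_{d,n}, p(h)=1 }
   (the minimum is attained, so it equals the infimum used here). *)
Definition christoffel (R : realType) (H : normedModType R)
  (ip : H -> H -> R) (e : nat -> H)
  (mu : {measure set (borelType H) -> \bar R}) (F : set H)
  (d n : nat) (h : H) : \bar R :=
  ereal_inf [set (\int[mu]_(x in (F : set (borelType H))) ((p x) ^+ 2)%:E)%E
            | p in [set p | Pdn ip e d n p /\ p h = 1]].

From HB Require Import structures.
From mathcomp Require Import all_boot all_order all_algebra.
From mathcomp Require Import all_classical all_reals all_analysis.
From mathcomp Require Import ring lra measurable_realfun.
Set Implicit Arguments. Unset Strict Implicit. Unset Printing Implicit Defensive.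
Import Order.TTheory GRing.Theory Num.Theory.
Import numFieldNormedType.Exports.
Local Open Scope classical_set_scope.
Local Open Scope ring_scope.

(* Every admissible p has p(h) = 1, so the integral of p^2 over F is at least
   its integral over {h}, which is mu{h}.  Conversely, mu(ball h r) tends to
   mu{h} as r -> 0.  By completeness of (e_k), each point of the compact set
   F \ ball h r is separated from h by finitely many coordinates, so one N and
   one margin c > 0 give S(x) := sum_{k<N} <x - h, e_k>^2 > c there.  With
   S <= M on F, the polynomial (1 - S/M)^m lies in P_{2m,N}, equals 1 at h,
   takes values in [0, 1] on F and is at most (1 - c/M)^m off the ball, so its
   integral is at most mu(ball h r) + (1 - c/M)^(2m). *)

Section PolynomialExpressions.
Variables (R : realType) (H : Type) (ip : H -> H -> R) (e : nat -> H).

Definition monomial {n} (a : {ffun 'I_n -> nat}) (f : H) : R :=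
  \prod_(i < n) ip f (e i) ^+ a i.

(* A list presentation of the elements of P_{d,n}: repeated multi-indices are
   allowed and exponents are not capped, which makes closure under sums and
   products immediate. *)
Definition poly_expr d n (p : H -> R) :=
  exists s : seq ({ffun 'I_n -> nat} * R),
    (forall x, x \in s -> ((\sum_(i < n) x.1 i)%N <= d)%N) /\
    (forall f, p f = \sum_(x <- s) x.2 * monomial x.1 f).

Lemma poly_expr_Pdn d n p : poly_expr d n p -> Pdn ip e d n p.
Proof.
case=> s [sd pE].
pose nat_of (a : {ffun 'I_n -> 'I_d.+1}) := [ffun i => (a i : nat)].
exists [ffun a => \sum_(x <- s | x.1 == nat_of a) x.2]; split.
  move=> a; rewrite ffunE => ca.
  have /hasP[x xs /eqP xa] : has (fun x => x.1 == nat_of a) s.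
    apply: contraNT ca => /hasPn sa; rewrite big1_seq // => x /andP[xa xs].
    by move: (sa x xs); rewrite xa.
  by move: (sd x xs); rewrite xa; under eq_bigr do rewrite ffunE.
move=> f; rewrite pE; symmetry.
under eq_bigr => a _ do rewrite ffunE big_mkcond mulr_suml.
rewrite exchange_big /=; apply: eq_big_seq => x xs.
have xd i : (x.1 i < d.+1)%N.
  by rewrite ltnS (leq_trans _ (sd x xs)) // (bigD1 i) //= leq_addr.
pose a0 : {ffun 'I_n -> 'I_d.+1} := [ffun i => Ordinal (xd i)].
have a0E : nat_of a0 = x.1 by apply/ffunP => i; rewrite !ffunE.
rewrite (bigD1 a0) //= a0E eqxx [X in _ + X]big1 ?addr0.
  by congr (_ * _); apply: eq_bigr => i _; rewrite ffunE.
move=> a aa0; case: eqP => [xa|]; last by rewrite mul0r.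
case/eqP: aa0; apply/ffunP => i; apply/val_inj.
by rewrite ffunE /=; rewrite xa ffunE.
Qed.

Lemma poly_expr_le d d' n p :
  (d <= d')%N -> poly_expr d n p -> poly_expr d' n p.
Proof.
by move=> dd' [s [sd pE]]; exists s; split=> // x /sd /leq_trans; apply.
Qed.

Lemma poly_expr_cst d n c : poly_expr d n (fun=> c).
Proof.
exists [:: ([ffun=> 0%N], c)]; split=> [x|f].
  by rewrite inE => /eqP -> /=; rewrite big1 // => i _; rewrite ffunE.
by rewrite big_seq1 /monomial big1 ?mulr1 // => i _; rewrite ffunE.
Qed.

Lemma poly_expr_coord n i : (i < n)%N -> poly_expr 1 n (fun f => ip f (e i)).
Proof.
move=> lt_in; pose i0 := Ordinal lt_in.
have deltaE j : ((j == i0) : nat) = if j == i0 then 1%N else 0%N.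
  by case: eqP.
exists [:: ([ffun j => (j == i0) : nat], 1)]; split=> [x|f].
  rewrite inE => /eqP -> /=; under eq_bigr do rewrite ffunE deltaE.
  by rewrite -big_mkcond /= big_pred1_eq.
rewrite big_seq1 /= mul1r /monomial (bigD1 i0) //= big1 ?mulr1 ?ffunE ?eqxx //.
by move=> j /negPf ji; rewrite ffunE ji.
Qed.

Lemma poly_expr_add d n p q :
  poly_expr d n p -> poly_expr d n q -> poly_expr d n (fun f => p f + q f).
Proof.
move=> [s [sd pE]] [t [td qE]]; exists (s ++ t); split=> [x|f].
  by rewrite mem_cat => /orP[/sd|/td].
by rewrite big_cat pE qE.
Qed.

Lemma poly_expr_sum d n (I : Type) (r : seq I) (P : I -> H -> R) :
  (forall i, poly_expr d n (P i)) ->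
  poly_expr d n (fun f => \sum_(i <- r) P i f).
Proof.
move=> PP; elim: r => [|i r IH].
  by under eq_fun do rewrite big_nil; apply: poly_expr_cst.
by under eq_fun do rewrite big_cons; apply: poly_expr_add.
Qed.

Lemma monomialD n (a b : {ffun 'I_n -> nat}) f :
  monomial [ffun i => (a i + b i)%N] f = monomial a f * monomial b f.
Proof.
by rewrite /monomial -big_split; apply: eq_bigr => i _; rewrite ffunE exprD.
Qed.

Lemma poly_expr_mul d1 d2 n p q : poly_expr d1 n p -> poly_expr d2 n q ->
  poly_expr (d1 + d2) n (fun f => p f * q f).
Proof.
move=> [s [sd pE]] [t [td qE]].
pose M := ({ffun 'I_n -> nat} * R)%type.
exists [seq ([ffun i => (x.1 i + y.1 i)%N], x.2 * y.2) | x : M <- s, y : M <- t].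
split=> [z|f].
  case/allpairsPdep=> x [y [xs yt ->]] /=.
  by under eq_bigr do rewrite ffunE; rewrite big_split leq_add ?sd ?td.
rewrite big_allpairs_dep /= pE qE big_distrl; apply: eq_bigr => x _ /=.
by rewrite big_distrr; apply: eq_bigr => y _ /=; rewrite monomialD; ring.
Qed.

Lemma poly_expr_exp d n p m :
  poly_expr d n p -> poly_expr (d * m) n (fun f => p f ^+ m).
Proof.
move=> Pp; elim: m => [|m IH].
  by under eq_fun do rewrite expr0; apply: poly_expr_cst.
by rewrite mulnS; under eq_fun do rewrite exprS; apply: poly_expr_mul.
Qed.

End PolynomialExpressions.

Section InnerProduct.
Variables (R : realType) (H : normedModType R) (ip : H -> H -> R).
Hypothesis ipP : is_inner_product ip.

Let ipC x y : ip x y = ip y x.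
Proof. by case: ipP. Qed.

Lemma ipDl x y z : ip (x + y) z = ip x z + ip y z.
Proof. by case: ipP => _ ipL _; rewrite -{1}(scale1r x) ipL mul1r. Qed.

Lemma ip0l z : ip 0 z = 0.
Proof. by apply: (addIr (ip 0 z)); rewrite add0r -ipDl addr0. Qed.

Lemma ipZl a x z : ip (a *: x) z = a * ip x z.
Proof. by case: ipP => _ ipL _; rewrite -[a *: x]addr0 ipL ip0l addr0. Qed.

Lemma ipBl x y z : ip (x - y) z = ip x z - ip y z.
Proof. by rewrite ipDl -scaleN1r ipZl mulN1r. Qed.

Lemma ipxx x : ip x x = `|x| ^+ 2.
Proof. by case: ipP. Qed.

Lemma ip_combination u w x y :
  ip (u *: x + w *: y) (u *: x + w *: y) =
  u ^+ 2 * ip x x + 2 * u * w * ip x y + w ^+ 2 * ip y y.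
Proof.
rewrite !ipDl !(ipC (u *: x)) !(ipC (w *: y)) !ipDl !ipZl.
by rewrite !(ipC _ (u *: x)) !(ipC _ (w *: y)) !ipZl (ipC y x); ring.
Qed.

(* Cauchy-Schwarz, from the nonnegativity of |b x - a y|^2 and |b x + a y|^2
   with a = |x| and b = |y|. *)
Lemma normr_ip_le x y : `|ip x y| <= `|x| * `|y|.
Proof.
have [->|x0] := eqVneq x 0; first by rewrite ip0l normr0 normr0 mul0r.
have [->|y0] := eqVneq y 0; first by rewrite ipC ip0l normr0 normr0 mulr0.
have xy_gt0 : 0 < `|x| * `|y| by rewrite mulr_gt0 ?normr_gt0.
set a := `|x| in xy_gt0 *; set b := `|y| in xy_gt0 *.
have sq_ge0 u : 0 <= ip (b *: x + u *: y) (b *: x + u *: y).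
  by rewrite ipxx sqr_ge0.
move: (sq_ge0 a) (sq_ge0 (- a)); rewrite !ip_combination !ipxx -/a -/b.
move=> ge0_plus ge0_minus; rewrite ler_norml.
by apply/andP; split; rewrite -(ler_pM2l xy_gt0); nra.
Qed.

Lemma continuous_ipl v : continuous (ip^~ v).
Proof.
move=> x; apply/cvgrPdist_lt => eps eps_gt0.
have v1_gt0 : 0 < `|v| + 1 by rewrite ltr_wpDl.
near=> t.
have xt : `|x - t| < eps / (`|v| + 1).
  by near: t; apply: cvgr_dist_lt; rewrite ?divr_gt0.
rewrite -ipBl (le_lt_trans (normr_ip_le _ _)) //.
move: xt; rewrite ltr_pdivlMr //.
by have := normr_ge0 (x - t); have := normr_ge0 v; nra.
Unshelve. all: by end_near.
Qed.

End InnerProduct.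

Section ContinuousPolynomials.
Variables (R : realType) (T : topologicalType).

Lemma continuous_sum (I : Type) (r : seq I) (P : I -> T -> R) :
  (forall i, continuous (P i)) -> continuous (fun x => \sum_(i <- r) P i x).
Proof.
move=> cP; elim: r => [|i r IH].
  by under eq_fun do rewrite big_nil; apply: cst_continuous.
by under eq_fun do rewrite big_cons; move=> x; apply: cvgD; [apply: cP|apply: IH].
Qed.

Lemma continuous_prod (I : Type) (r : seq I) (P : I -> T -> R) :
  (forall i, continuous (P i)) -> continuous (fun x => \prod_(i <- r) P i x).
Proof.
move=> cP; elim: r => [|i r IH].
  by under eq_fun do rewrite big_nil; apply: cst_continuous.
by under eq_fun do rewrite big_cons; move=> x; apply: cvgM; [apply: cP|apply: IH].
Qed.

Lemma continuous_expr (f : T -> R) m :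
  continuous f -> continuous (fun x => f x ^+ m).
Proof.
move=> cf; elim: m => [|m IH].
  by under eq_fun do rewrite expr0; apply: cst_continuous.
by under eq_fun do rewrite exprS; move=> x; apply: cvgM; [apply: cf|apply: IH].
Qed.

End ContinuousPolynomials.

Lemma continuous_Pdn (R : realType) (H : normedModType R) (ip : H -> H -> R)
  (e : nat -> H) d n p :
  is_inner_product ip -> Pdn ip e d n p -> continuous p.
Proof.
move=> ipP [c [_ pE]]; rewrite (funext pE).
apply: continuous_sum => a x; apply: cvgM; first exact: cvg_cst.
apply: continuous_prod => i; apply: continuous_expr.
exact: continuous_ipl.
Qed.

Section Borel.
Variable T : ptopologicalType.

Lemma open_measurable_borel (A : set T) :
  open A -> measurable (A : set (borelType T)).
Proof. exact: sub_sigma_algebra. Qed.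

Lemma closed_measurable_borel (A : set T) :
  closed A -> measurable (A : set (borelType T)).
Proof.
move=> cA; rewrite -(setCK A); apply: measurableC.
by apply: open_measurable_borel; apply: closed_openC.
Qed.

Lemma continuous_measurable_borel (R : realType) (g : T -> R) :
  continuous g -> measurable_fun setT (g : borelType T -> R).
Proof.
move=> /continuousP cg; apply: (measurability _ (RGenOpens.measurableE R)).
move=> _ [_ [a [b ->] <-]]; rewrite setTI; apply: open_measurable_borel.
exact/cg/interval_open.
Qed.


End Borel.

Lemma compact_nondecreasing_cover (T : ptopologicalType) (K : set T)
  (U : nat -> set T) : compact K -> (forall k, open (U k)) ->
  {homo U : j k / (j <= k)%N >-> j `<=` k} ->
  K `<=` \bigcup_k U k -> exists N, K `<=` U N.
Proof.
rewrite compact_cover => cK oU mU KU.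
have [D _ KD] : finite_subset_cover setT U K.
  apply: cK => [k _|x /KU[k _ Ux]]; [exact: oU | by exists k].
exists (\max_(i <- finmap.enum_fset D) i)%N => x /KD[i Di Ui]; apply: (mU i) => //.
exact: (@leq_bigmax_seq _ _ xpredT id).
Qed.

Lemma invSn_lt (R : archiRealFieldType) (c : R) j :
  0 < c -> (Num.truncn c^-1 <= j)%N -> j.+1%:R^-1 < c.
Proof.
move=> c_gt0 cj; rewrite -[ltRHS]invrK ltf_pV2 ?posrE ?invr_gt0 ?ltr0n //.
by rewrite (lt_le_trans (truncnS_gt _)) // ler_nat ltnS.
Qed.

Section CoordinateDistance.
Variables (R : realType) (H : Type) (ip : H -> H -> R) (e : nat -> H).

Definition coord_dist2 k (h f : H) : R :=
  \sum_(i < k) (ip f (e i) - ip h (e i)) ^+ 2.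

Lemma coord_dist2_ge0 k h f : 0 <= coord_dist2 k h f.
Proof. by apply: sumr_ge0 => i _; apply: sqr_ge0. Qed.

Lemma coord_dist2_homo h f :
  {homo (fun k => coord_dist2 k h f) : j k / (j <= k)%N >-> j <= k}.
Proof.
move=> j k jk; rewrite /coord_dist2 -(subnKC jk) big_split_ord /= lerDl.
by apply: sumr_ge0 => i _; apply: sqr_ge0.
Qed.

Lemma coord_dist2xx k h : coord_dist2 k h h = 0.
Proof. by rewrite /coord_dist2 big1 // => i _; rewrite subrr expr0n. Qed.

Lemma coord_dist2_poly k n h : (k <= n)%N -> poly_expr ip e 2 n (coord_dist2 k h).
Proof.
move=> kn; apply: poly_expr_sum => i.
have lt_in : (i < n)%N by apply: leq_trans kn.
apply: (poly_expr_exp 2 (poly_expr_add (poly_expr_coord ip e lt_in) _)).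
exact: poly_expr_cst.
Qed.

End CoordinateDistance.

Section OrthonormalSystem.
Context {R : realType} {H : normedModType R} {ip : H -> H -> R} {e : nat -> H}.
Hypotheses (ipP : is_inner_product ip) (eP : complete_orthonormal ip e).

Lemma continuous_coord_dist2 k h : continuous (coord_dist2 ip e k h).
Proof.
exact: continuous_Pdn ipP (poly_expr_Pdn (coord_dist2_poly ip e h (leqnn k))).
Qed.

Lemma coord_dist2_gt0 h f : f != h -> exists k, 0 < coord_dist2 ip e k h f.
Proof.
move=> fh; have [i ei_neq0] : exists i, ip f (e i) - ip h (e i) != 0.
  apply: contrapT => all0; move/eqP: fh; apply; apply/eqP; rewrite -subr_eq0.
  apply/eqP/eP.2 => i; rewrite ipBl //; apply/eqP.
  by apply: contrapT => /negP ne0; apply: all0; exists i.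
exists i.+1; rewrite /coord_dist2 big_ord_recr /= ltr_wpDl //.
  exact: (coord_dist2_ge0 ip e).
by rewrite lt_def sqrf_eq0 ei_neq0 sqr_ge0.
Qed.

(* The sets [{x | 1/(j+1) < coord_dist2 j h x}] increase with [j] and cover
   [F \ {h}], so finitely many of them cover the compact set [F \ ball h r]. *)
Lemma coord_dist2_sep (F : set H) h r : compact F -> 0 < r ->
  exists N c, 0 < c /\ forall x, F x -> ~ ball h r x -> c < coord_dist2 ip e N h x.
Proof.
move=> cF r_gt0.
have cK : compact (F `&` ~` ball h r).
  by apply: compact_closedI => //; apply: open_closedC; apply: ball_open.
pose U j := [set x | j.+1%:R^-1 < coord_dist2 ip e j h x].
have oU j : open (U j).
  apply: (@open_comp _ _ (coord_dist2 ip e j h) [set y | j.+1%:R^-1 < y]).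
    by move=> x _; apply: continuous_coord_dist2.
  exact: open_gt.
have mU : {homo U : j k / (j <= k)%N >-> j `<=` k}.
  move=> j k jk x; rewrite /U /= => Ux.
  apply: le_lt_trans (lt_le_trans Ux (coord_dist2_homo ip e h x jk)).
  by rewrite lef_pV2 ?posrE ?ltr0n // ler_nat.
have KU : F `&` ~` ball h r `<=` \bigcup_j U j.
  move=> x [_ xr]; have xh : x != h.
    by apply: contra_notN xr => /eqP ->; apply: ballxx.
  have [k dist_gt0] := coord_dist2_gt0 xh.
  exists (maxn k (Num.truncn (coord_dist2 ip e k h x)^-1)) => //.
  rewrite /U /= (lt_le_trans (invSn_lt dist_gt0 (leq_maxr _ _))) //.
  exact/(coord_dist2_homo ip e)/leq_maxl.
have [N KUN] := compact_nondecreasing_cover cK oU mU KU.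
exists N, N.+1%:R^-1; split; first by rewrite invr_gt0 ltr0n.
by move=> x Fx xr; apply: KUN.
Qed.

Lemma coord_dist2_ubound (F : set H) k h : compact F ->
  exists2 M, 0 < M & forall x, F x -> coord_dist2 ip e k h x <= M.
Proof.
move=> cF; have /compact_bounded/pinfty_ex_gt0[M M_gt0 FM] :=
  continuous_compact (continuous_subspaceT (@continuous_coord_dist2 k h)) cF.
exists M => // x Fx; rewrite (le_trans (ler_norm _)) //.
by apply: FM; exists x.
Qed.

End OrthonormalSystem.

Lemma integral_le_measure_add d (T : measurableType d) (R : realType)
  (mu : probability T R) (D A : set T) (g : T -> R) (delta : R) :
  measurable D -> measurable A -> measurable_fun D g -> 0 <= delta ->
  (forall x, D x -> 0 <= g x <= \1_A x + delta) ->
  (\int[mu]_(x in D) (g x)%:E <= mu A + delta%:E)%E.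
Proof.
move=> mD mA mg delta_ge0 gA.
have mIA : measurable_fun D (EFin \o (\1_A : T -> R)).
  by apply/measurable_EFinP; apply: measurable_funTS; apply: measurable_indic.
apply: (@le_trans _ _ (\int[mu]_(x in D) ((\1_A x)%:E + delta%:E))%E).
  apply: ge0_le_integral => //.
  - by move=> x Dx; rewrite lee_fin; case/andP: (gA x Dx).
  - exact/measurable_EFinP.
  - by apply: emeasurable_funD => //; apply: measurable_cst.
  - by move=> x Dx; rewrite -EFinD lee_fin; case/andP: (gA x Dx).
rewrite ge0_integralD //.
rewrite integral_indic // integral_cst //.
apply: leeD; first exact: measureIl.
by rewrite muleC gee_pMl ?fin_num_measure ?lee_fin ?probability_le1.
Qed.

Lemma exists_expr_lt (R : realType) (r eps : R) :
  0 <= r -> r < 1 -> 0 < eps -> exists m, r ^+ m < eps.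
Proof.
move=> r_ge0 r_lt1 eps_gt0.
have /cvg_expr/cvgrPdist_lt/(_ _ eps_gt0)[m _ rm] : `|r| < 1 by rewrite ger0_norm.
by exists m; have := rm m (leqnn m); rewrite /= sub0r normrN ger0_norm ?exprn_ge0.
Qed.

Section ChristoffelBounds.
Context {R : realType} {H : normedModType R} {ip : H -> H -> R} {e : nat -> H}.
Hypotheses (ipP : is_inner_product ip) (eP : complete_orthonormal ip e).

Lemma set1_measurable_borel (h : H) : measurable ([set h] : set (borelType H)).
Proof.
apply: closed_measurable_borel.
exact/accessible_closed_set1/hausdorff_accessible/(@norm_hausdorff _ H).
Qed.

Lemma christoffel_ge_atom (mu : {measure set (borelType H) -> \bar R}) F d n h :
  closed F -> F h -> (mu [set h] <= christoffel ip e mu F d n h)%E.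
Proof.
move=> cF Fh; have mh := set1_measurable_borel h.
apply: le_ereal_inf_tmp => _ [p [Pp ph] <-].
have mp2 : measurable_fun (F : set (borelType H)) (EFin \o (fun x => p x ^+ 2)).
  apply/measurable_EFinP/measurable_funTS; apply: continuous_measurable_borel.
  by apply: continuous_expr; apply: continuous_Pdn ipP Pp.
have -> : mu [set h] = (\int[mu]_(x in ([set h] : set (borelType H))) (p x ^+ 2)%:E)%E.
  rewrite -[LHS]mul1e -integral_cst //; apply: eq_integral => x.
  by rewrite inE => ->; rewrite ph expr1n.
apply: ge0_subset_integral => //.
- exact: closed_measurable_borel.
- by move=> x _; rewrite lee_fin sqr_ge0.
- by move=> x ->.
Qed.

Lemma bigcap_ball_invSn (h : H) : \bigcap_k ball h k.+1%:R^-1 = [set h].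
Proof.
apply/seteqP; split=> [x hx|x -> k _]; last by apply: ballxx; rewrite invr_gt0.
suff /(close_eq (@norm_hausdorff _ H)) -> : close h x by [].
rewrite ball_close => eps; apply: le_ball (hx _ I).
exact/ltW/invSn_lt.
Qed.

Lemma probability_ball_lt (mu : probability (borelType H) R) h eps : 0 < eps ->
  exists2 r, 0 < r & (mu (ball h r : set (borelType H)) < mu [set h] + eps%:E)%E.
Proof.
move=> eps_gt0; pose B k : set (borelType H) := ball h k.+1%:R^-1.
have mB k : measurable (B k) by apply: open_measurable_borel; apply: ball_open.
have B_dec : nonincreasing_seq B.
  move=> j k jk; apply/subsetPset/le_ball.
  by rewrite lef_pV2 ?posrE ?ltr0n // ler_nat.
have muh_fin : mu [set h] \is a fin_num.
  exact: fin_num_measure (set1_measurable_borel h).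
have capB : \bigcap_k B k = [set h] by apply: bigcap_ball_invSn.
have /fine_cvgP[_ /cvgrPdist_lt/(_ _ eps_gt0)[k _ Bk]] :
    (mu \o B) @ \oo --> (fine (mu [set h]))%:E.
  rewrite fineK // -capB; apply: nonincreasing_cvg_mu => //.
    exact: le_lt_trans (probability_le1 mu (mB 0)) (ltry 1).
  by rewrite capB; apply: set1_measurable_borel.
exists k.+1%:R^-1; first by rewrite invr_gt0.
rewrite -(fineK muh_fin) -(fineK (fin_num_measure mu _ (mB k))) -EFinD lte_fin.
by have := Bk k (leqnn k); rewrite /= distrC => /(le_lt_trans (ler_norm _)); lra.
Qed.

Lemma peak_polynomial (F : set H) h r delta : compact F -> 0 < r -> 0 < delta ->
  exists N, forall d n, (N <= d)%N -> (N <= n)%N ->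
  exists2 p, Pdn ip e d n p /\ p h = 1 &
    forall x, F x -> 0 <= p x ^+ 2 <= \1_(ball h r) x + delta.
Proof.
move=> cF r_gt0 delta_gt0.
have [N [c [c_gt0 Fc]]] := coord_dist2_sep ipP eP h cF r_gt0.
have [M0 M0_gt0 FM0] := coord_dist2_ubound (e := e) ipP N h cF.
pose M := M0 + c; pose rho := 1 - c / M.
have M_gt0 : 0 < M by rewrite addr_gt0.
have cM_gt0 : 0 < c / M by rewrite divr_gt0.
have cM_lt1 : c / M < 1 by rewrite ltr_pdivrMr // mul1r ltrDr.
have [m rho_m] : exists m, rho ^+ m < delta.
  by apply: exists_expr_lt delta_gt0; rewrite /rho ?subr_ge0 ?ltW // ltrBlDr ltrDl.
pose q x := 1 - coord_dist2 ip e N h x / M.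
have q01 x : F x -> 0 <= q x <= 1.
  move=> Fx; rewrite subr_ge0 lerBlDr lerDl divr_ge0 ?coord_dist2_ge0 ?(ltW M_gt0) //=.
  by rewrite ler_pdivrMr // mul1r (le_trans (FM0 x Fx)) // lerDl ltW.
have q_rho x : F x -> ~ ball h r x -> q x <= rho.
  by move=> Fx xr; rewrite lerD2l lerN2 ler_pM2r ?invr_gt0 // ltW ?Fc.
exists (maxn (2 * m) N) => d n dN nN; exists (fun x => q x ^+ m); first split.
- apply/poly_expr_Pdn/(poly_expr_le (leq_trans (leq_maxl _ _) dN)).
  apply: poly_expr_exp; apply: poly_expr_add; first exact: poly_expr_cst.
  under eq_fun do rewrite -mulrN mulrC.
  apply: (poly_expr_mul (poly_expr_cst ip e 0 n _)).
  exact/(coord_dist2_poly ip e)/(leq_trans (leq_maxr _ _) nN).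
- by rewrite /q coord_dist2xx mul0r subr0 expr1n.
- move=> x Fx; have /andP[q_ge0 q_le1] := q01 x Fx.
  have qm01 : 0 <= q x ^+ m <= 1 by rewrite exprn_ge0 ?exprn_ile1.
  have /andP[qm_ge0 qm_le1] := qm01.
  rewrite sqr_ge0 /= (le_trans (ler_piMl qm_ge0 qm_le1)) //.
  have [xr|xr] := pselect (ball h r x).
    by rewrite indicE mem_set // (le_trans qm_le1) // lerDl ltW.
  rewrite indicE memNset // add0r (le_trans _ (ltW rho_m)) //.
  by rewrite lerXn2r ?nnegrE ?q_rho // (le_trans q_ge0) ?q_rho.
Qed.

Lemma christoffel_le_atom (mu : probability (borelType H) R) (F : set H) h eps :
  compact F -> 0 < eps -> exists N, forall d n, (N <= d)%N -> (N <= n)%N ->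
  (christoffel ip e mu F d n h <= mu [set h] + eps%:E)%E.
Proof.
move=> cF eps_gt0; have eps2_gt0 : 0 < eps / 2 by rewrite divr_gt0.
have [r r_gt0 mu_r] := probability_ball_lt mu h eps2_gt0.
have [N peakN] := peak_polynomial h cF r_gt0 eps2_gt0.
exists N => d n dN nN; have [p [Pp ph] p_peak] := peakN d n dN nN.
have mF : measurable (F : set (borelType H)).
  by apply: closed_measurable_borel; apply: compact_closed (@norm_hausdorff _ H) cF.
apply: (@le_trans _ _ (\int[mu]_(x in (F : set (borelType H))) (p x ^+ 2)%:E)%E).
  by apply: ereal_inf_lbound; exists p.
apply: le_trans (integral_le_measure_add _ mF _ _ _ p_peak) _.
- by apply: open_measurable_borel; apply: ball_open.
- apply: measurable_funTS; apply: continuous_measurable_borel.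
  by apply: continuous_expr; apply: continuous_Pdn ipP Pp.
- by rewrite ltW.
by rewrite [in leRHS](splitr eps) EFinD addeA leeD2r // ltW.
Qed.

End ChristoffelBounds.

Theorem lemma4 (R : realType) (H : completeNormedModType R)
  (ip : H -> H -> R) (e : nat -> H)
  (Hip : is_inner_product ip) (He : complete_orthonormal ip e)
  (F : set H) (HF : compact F)
  (mu : probability (borelType H) R) (muF : mu (F : set (borelType H)) = 1%E)
  (h : H) (hF : F h) :
  forall eps : R, 0 < eps -> exists N : nat, forall d n : nat,
    (N <= d)%N -> (N <= n)%N ->
    (`| christoffel ip e mu F d n h - mu ([set h] : set (borelType H)) | < eps%:E)%E.
Proof.
move=> eps eps_gt0; have eps2_gt0 : 0 < eps / 2 by rewrite divr_gt0.
have [N le_atom] := christoffel_le_atom Hip He mu h HF eps2_gt0.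
exists N => d n dN nN.
have cF : closed F := compact_closed (@norm_hausdorff _ H) HF.
have lo : (mu [set h] <= christoffel ip e mu F d n h)%E :=
  christoffel_ge_atom Hip mu d n cF hF.
have muh_fin : mu [set h] \is a fin_num.
  exact: fin_num_measure (set1_measurable_borel h).
move: lo (le_atom d n dN nN); rewrite -(fineK muh_fin).
case: christoffel => [c| |] //=; rewrite -EFinD !lee_fin lte_fin => c_ge c_le.
by rewrite ger0_norm ?subr_ge0 //; lra.
Qed.
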